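(* For every $m\ge2$, let $C=C_{2m}(1,1)=J_{2m}+E_{m-1,m+1}-E_{m,m+2}\in M_{2m}$. Then for all $\theta\in\mathbb{R}$ and $u\in\mathbb{C}$, $$\det\bigl(uI-H_C(\theta)\bigr)=2^{-2m}\bigl(U_m(u)-U_{m-1}(u)-U_{m-2}(u)\bigr)\bigl(U_m(u)+U_{m-1}(u)-U_{m-2}(u)\bigr).$$ In particular $C_{2m}(1,1)$ has the Circularity property.
   Context: $J_n$ is the $n\times n$ nilpotent Jordan block (ones on the first superdiagonal, zeros elsewhere); $E_{a,b}$ is the matrix unit with $1$ in position $(a,b)$ and zeros elsewhere. $H_X(\theta)=\frac12(e^{-i\theta}X+e^{i\theta}X^* )$; $X$ has the Circularity property if the spectrum of $H_X(\theta)$ is independent of $\theta$. $U_k$ are Chebyshev polynomials of the second kind: $U_{-1}=0$, $U_0=1$, $U_{k+1}(u)=2uU_k(u)-U_{k-1}(u)$. *)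

From HB Require Import structures.
From mathcomp Require Import all_boot all_order all_algebra.
From mathcomp Require Import reals trigo.
From mathcomp Require Import complex.
Set Implicit Arguments. Unset Strict Implicit. Unset Printing Implicit Defensive.
Import Order.TTheory GRing.Theory Num.Theory.
Local Open Scope ring_scope.

Definition expi (R : realType) (t : R) : R[i] := Complex (cos t) (sin t).

Definition adjmx (R : realType) (n : nat) (X : 'M[R[i]]_n) : 'M[R[i]]_n :=
  map_mx (@conjc R) X^T.

Definition Hmx (R : realType) (n : nat) (X : 'M[R[i]]_n) (t : R) : 'M[R[i]]_n :=
  2^-1 *: (expi (- t) *: X + expi t *: adjmx X).

Definition circular (R : realType) (n : nat) (X : 'M[R[i]]_n) : Prop :=
  forall (t1 t2 : R) (l : R[i]),
    eigenvalue (Hmx X t1) l = eigenvalue (Hmx X t2) l.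

Fixpoint chebU {F : nzRingType} (k : nat) (u : F) : F :=
  match k with
  | 0 => 1
  | 1 => 2 * u
  | (k'.+1 as k1).+1 => 2 * u * chebU k1 u - chebU k' u
  end.

(* The 2m x 2m matrix C_{2m}(1,1) = J_{2m} + E_{m-1,m+1} - E_{m,m+2}.
   Entries are indexed 1-based in the paper: row a = i+1, column b = j+1. *)
Definition Cmx (R : realType) (m : nat) : 'M[R[i]]_(2 * m) :=
  \matrix_(i < 2 * m, j < 2 * m)
    let a := i.+1 in let b := j.+1 in
    ((b == a.+1)%:R + ((a == m.-1) && (b == m.+1))%:R
                    - ((a == m) && (b == m.+2))%:R).

From HB Require Import structures.
From mathcomp Require Import all_boot all_order all_algebra.
From mathcomp Require Import reals trigo.
From mathcomp Require Import complex.
From mathcomp Require Import ring zify.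
Set Implicit Arguments. Unset Strict Implicit. Unset Printing Implicit Defensive.
Import Order.TTheory GRing.Theory Num.Theory.
Local Open Scope ring_scope.

(* With x = 2u, e = e^{it} and w = e^{-it} (so e w = 1), the matrix 2(uI - H_C(t))
   is x I - w C - e C^T. It is tridiagonal with diagonal x and off-diagonal products
   e w = 1, except for the 4 x 4 block on the rows and columns m-1, ..., m+2
   (1-based). Expanding along the m-2 rows before and the m-2 rows after that block
   is the three-term recurrence of the Chebyshev polynomials, so the determinant is a
   combination, with coefficients U_{m-2}(u) and U_{m-3}(u), of minors of the block;
   this combination depends on x and e w only, which makes it independent of t. *)

Section NatIndexedMatrices.
Variable R : comNzRingType.
Implicit Types f g : nat -> nat -> R.

(* Entry functions are defined on all of nat, so that shifting indices is plain
   arithmetic. *)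
Definition fmx n f : 'M[R]_n := \matrix_(i < n, j < n) f i j.

Lemma eq_det_fmx n f g :
  (forall i j, (i < n)%N -> (j < n)%N -> f i j = g i j) ->
  \det (fmx n f) = \det (fmx n g).
Proof. by move=> eq_fg; congr (\det _); apply/matrixP => i j; rewrite !mxE eq_fg. Qed.

Lemma det_fmx_tr n f : \det (fmx n f) = \det (fmx n (fun i j => f j i)).
Proof. by rewrite -det_tr; congr (\det _); apply/matrixP => i j; rewrite !mxE. Qed.

Lemma expand_det_fmx_first n f : \det (fmx n.+1 f) =
  \sum_(j < n.+1) f 0%N j * ((-1) ^+ j * \det (fmx n (fun a b => f a.+1 (bump j b)))).
Proof.
rewrite (expand_det_row _ ord0); apply: eq_bigr => j _; rewrite !mxE /cofactor add0n.
by congr (_ * (_ * \det _)); apply/matrixP => a b; rewrite !mxE.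
Qed.

Lemma expand_det_fmx_last n f : \det (fmx n.+1 f) =
  \sum_(j < n.+1) f n j * ((-1) ^+ (n + j)%N * \det (fmx n (fun a b => f a (bump j b)))).
Proof.
rewrite (expand_det_row _ ord_max); apply: eq_bigr => j _; rewrite !mxE /cofactor.
congr (_ * (_ * \det _)); apply/matrixP => a b; rewrite !mxE /=.
by rewrite /bump leqNgt ltn_ord.
Qed.

Lemma det_fmx_peel_first n f :
  (forall j, (2 <= j)%N -> f 0%N j = 0) -> (forall i, (2 <= i)%N -> f i 0%N = 0) ->
  \det (fmx n.+2 f) = f 0%N 0%N * \det (fmx n.+1 (fun a b => f a.+1 b.+1))
     - f 0%N 1%N * f 1%N 0%N * \det (fmx n (fun a b => f a.+2 b.+2)).
Proof.
move=> row0 col0.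
rewrite expand_det_fmx_first !big_ord_recl big1 ?addr0; last first.
  by move=> j _; rewrite row0 ?mul0r.
rewrite /= expr0 mul1r expr1; congr (_ + _).
rewrite det_fmx_tr expand_det_fmx_first big_ord_recl big1 ?addr0; last first.
  by move=> j _; rewrite col0 ?mul0r.
rewrite /= expr0 mul1r det_fmx_tr mulN1r mulrN mulrA.
by congr (- (_ * \det _)); apply/matrixP => a b; rewrite !mxE.
Qed.

Lemma det_fmx_peel_last n f :
  (forall j, (j < n)%N -> f n.+1 j = 0) -> (forall i, (i < n)%N -> f i n.+1 = 0) ->
  \det (fmx n.+2 f) = f n.+1 n.+1 * \det (fmx n.+1 f)
     - f n.+1 n * f n n.+1 * \det (fmx n f).
Proof.
move=> rowl coll.
rewrite expand_det_fmx_last !big_ord_recr /= big1 ?add0r; last first.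
  by move=> j _; rewrite rowl ?mul0r.
rewrite addSn !addnn exprS -!muln2 !exprM !sqrr_sign mulr1 mulN1r mul1r addrC.
congr (_ * _ + _); first by apply: eq_det_fmx => i j _ lt_j; rewrite /bump leqNgt lt_j.
rewrite mulrN -mulrA; congr (- (_ * _)).
rewrite det_fmx_tr expand_det_fmx_last big_ord_recr /= big1 ?add0r; last first.
  by move=> j _; rewrite /bump leqnn coll ?mul0r.
rewrite addnn -muln2 exprM sqrr_sign mul1r det_fmx_tr /bump leqnn.
congr (_ * _); apply: eq_det_fmx => i j lt_i lt_j.
by rewrite /bump leqNgt lt_i leqNgt lt_j.
Qed.

End NatIndexedMatrices.

Section Continuants.
Variables (R : comNzRingType) (x : R).
Implicit Types f : nat -> nat -> R.

Fixpoint lucasU k : R :=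
  match k with
  | 0 => 0
  | 1 => 1
  | (k'.+1 as k1).+1 => x * lucasU k1 - lucasU k'
  end.

Lemma lucasU_SS k : lucasU k.+2 = x * lucasU k.+1 - lucasU k.
Proof. by []. Qed.

Lemma lucasU_unroll q (D : nat -> R) :
  (forall k, (k < q)%N -> D k = x * D k.+1 - D k.+2) ->
  D 0%N = lucasU q.+1 * D q - lucasU q * D q.+1.
Proof.
elim/ltn_ind: q D => -[|[|q]] IH D rec.
- by rewrite /= mul1r mul0r subr0.
- by rewrite (rec 0%N) //= mulr1 subr0 mul1r.
rewrite (rec 0%N) // (IH q.+1 _ (fun k => D k.+1)) => [|//|k lt_k]; last exact: rec.
rewrite (IH q _ (fun k => D k.+2)) => [|//|k lt_k]; last by apply: rec; lia.
by rewrite !lucasU_SS; ring.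
Qed.

Lemma det_fmx_head f q n :
  (forall k, (k < q)%N -> f k k = x /\ f k k.+1 * f k.+1 k = 1) ->
  (forall k j, (k < q)%N -> (k.+2 <= j)%N -> f k j = 0 /\ f j k = 0) ->
  \det (fmx (n.+1 + q) f) =
    lucasU q.+1 * \det (fmx n.+1 (fun a b => f (q + a)%N (q + b)%N))
    - lucasU q * \det (fmx n (fun a b => f (q.+1 + a)%N (q.+1 + b)%N)).
Proof.
move=> tridiag far.
pose D k := \det (fmx (n.+1 + q - k) (fun a b => f (k + a)%N (k + b)%N)).
transitivity (D 0%N); first by rewrite /D subn0.
rewrite (@lucasU_unroll q D) => [|k lt_kq]; rewrite /D.
  have -> : (n.+1 + q - q = n.+1)%N by lia.
  by have -> : (n.+1 + q - q.+1 = n)%N by lia.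
have -> : (n.+1 + q - k = (n.+1 + q - k.+2).+2)%N by lia.
have -> : (n.+1 + q - k.+1 = (n.+1 + q - k.+2).+1)%N by lia.
rewrite det_fmx_peel_first => [|j le2j|i le2i]; rewrite ?addn0 ?addn1; first last.
- by case: (far k (k + i)%N) => //; lia.
- by case: (far k (k + j)%N) => //; lia.
have [-> ->] := tridiag k lt_kq.
by rewrite mul1r; congr (_ * _ - _); apply: eq_det_fmx => a b _ _; rewrite !addnS !addSn.
Qed.

Lemma det_fmx_tail f q n :
  (forall k, (n <= k < n + q)%N -> f k.+1 k.+1 = x /\ f k.+1 k * f k k.+1 = 1) ->
  (forall k j, (n <= k < n + q)%N -> (j < k)%N -> f k.+1 j = 0 /\ f j k.+1 = 0) ->
  \det (fmx (n + q).+1 f) = lucasU q.+1 * \det (fmx n.+1 f) - lucasU q * \det (fmx n f).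
Proof.
move=> tridiag far.
pose D k := \det (fmx ((n + q).+1 - k) f).
transitivity (D 0%N); first by rewrite /D subn0.
rewrite (@lucasU_unroll q D) => [|k lt_kq]; rewrite /D.
  have -> : ((n + q).+1 - q = n.+1)%N by lia.
  by have -> : ((n + q).+1 - q.+1 = n)%N by lia.
have lt_l : (n <= n + q - k.+1 < n + q)%N by lia.
have -> : ((n + q).+1 - k = (n + q - k.+1).+2)%N by lia.
have -> : ((n + q).+1 - k.+1 = (n + q - k.+1).+1)%N by lia.
have -> : ((n + q).+1 - k.+2 = n + q - k.+1)%N by lia.
rewrite det_fmx_peel_last => [|i lt_i|j lt_j]; first last.
- by case: (far _ j lt_l).
- by case: (far _ i lt_l).
by have [-> ->] := tridiag _ lt_l; rewrite mul1r.
Qed.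
End Continuants.

Section Pencil.
Variables (R : comNzRingType) (x e w : R).

(* 0-based entries of C_{2(p+2)}(1,1): the two extra entries sit at (p, p+2) and
   (p+1, p+3). *)
Definition Centry (p i j : nat) : R :=
  (j == i.+1)%:R + ((i == p) && (j == p.+2))%:R - ((i == p.+1) && (j == p.+3))%:R.

Definition pencil p i j : R := x * (i == j)%:R - w * Centry p i j - e * Centry p j i.

Ltac Centry_cases :=
  rewrite /Centry; do ![case: eqP => ? /=]; rewrite ?subrr ?subr0 ?addr0 //; lia.

Lemma Centry_lower p i j : (j <= i)%N -> Centry p i j = 0.
Proof. by move=> le_ji; Centry_cases. Qed.

Lemma Centry_succ p i : Centry p i i.+1 = 1.
Proof. by Centry_cases. Qed.

Lemma Centry_far p i j :
  (i.+2 <= j)%N -> (i < p)%N || (p.+3 < j)%N -> Centry p i j = 0.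
Proof. by move=> lt_ij /orP away; Centry_cases. Qed.

Lemma pencil_diag p i : pencil p i i = x.
Proof. by rewrite /pencil Centry_lower // eqxx mulr1n; ring. Qed.

Lemma pencil_succ p i : pencil p i i.+1 = - w.
Proof. by rewrite /pencil Centry_succ Centry_lower // (ltn_eqF (ltnSn i)) mulr0n; ring. Qed.

Lemma pencil_pred p i : pencil p i.+1 i = - e.
Proof. by rewrite /pencil Centry_succ Centry_lower // (gtn_eqF (ltnSn i)) mulr0n; ring. Qed.

Lemma pencil_far p i j : (i.+2 <= j)%N -> (i < p)%N || (p.+3 < j)%N ->
  pencil p i j = 0 /\ pencil p j i = 0.
Proof.
move=> lt_ij away; have [ne_ij ne_ji] : i != j /\ j != i by split; apply/eqP; lia.
rewrite /pencil Centry_far // !Centry_lower; try lia.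
by rewrite (negbTE ne_ij) (negbTE ne_ji) mulr0n; split; ring.
Qed.

Lemma pencil_shift k q a b : pencil (k + q)%N (k + a)%N (k + b)%N = pencil q a b.
Proof. by rewrite /pencil /Centry -!addnS !eqn_add2l. Qed.

Ltac compute_det_fmx :=
  rewrite !(expand_det_fmx_first, big_ord_recl, big_ord0, det_mx00) /pencil /Centry /bump /=; ring.

Lemma det_pencil_core4 :
  \det (fmx 4 (pencil 0)) = x ^+ 4 - 5 * x ^+ 2 * (e * w) + 4 * (e * w) ^+ 2.
Proof. compute_det_fmx. Qed.

(* Only this sum enters det_pencil; each summand separately contains e + w. *)
Lemma det_pencil_core3 :
  \det (fmx 3 (pencil 0)) + \det (fmx 3 (fun a b => pencil 0 a.+1 b.+1))
  = 2 * x ^+ 3 - 6 * x * (e * w).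
Proof. compute_det_fmx. Qed.

Lemma det_pencil_core2 : \det (fmx 2 (fun a b => pencil 0 a.+1 b.+1)) = x ^+ 2 - e * w.
Proof. compute_det_fmx. Qed.

Lemma det_pencil p : e * w = 1 ->
  \det (fmx (2 * p.+2) (pencil p)) =
    (lucasU x p.+3 - lucasU x p.+2 - lucasU x p.+1)
    * (lucasU x p.+3 + lucasU x p.+2 - lucasU x p.+1).
Proof.
move=> ew1.
have core n : \det (fmx n (fun a b => pencil p (p + a)%N (p + b)%N)) = \det (fmx n (pencil 0)).
  by apply: eq_det_fmx => a b _ _; rewrite -[pencil 0 a b](pencil_shift p) addn0.
have core1 n : \det (fmx n (fun a b => pencil p (p.+1 + a)%N (p.+1 + b)%N))
             = \det (fmx n (fun a b => pencil 0 a.+1 b.+1)).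
  by apply: eq_det_fmx => a b _ _; rewrite -[pencil 0 _ _](pencil_shift p) addn0 !addSnnS.
have -> : (2 * p.+2 = (p.+3 + p).+1)%N by lia.
rewrite (@det_fmx_tail _ x) => [|k _|k j /andP[le_pk _] lt_jk]; first last.
- have away : (j < p)%N || (p.+3 < k.+1)%N by rewrite ltnS le_pk orbT.
  by have [-> ->] := @pencil_far p j k.+1 lt_jk away.
- by rewrite pencil_diag pencil_pred pencil_succ mulrNN ew1.
have head_tridiag k : (k < p)%N -> pencil p k k = x /\ pencil p k k.+1 * pencil p k.+1 k = 1.
  by rewrite pencil_diag pencil_succ pencil_pred mulrNN mulrC ew1.
have head_far k j : (k < p)%N -> (k.+2 <= j)%N -> pencil p k j = 0 /\ pencil p j k = 0.
  by move=> lt_kp lt_kj; apply: pencil_far; rewrite ?lt_kp.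
rewrite (det_fmx_head 3 head_tridiag head_far) (det_fmx_head 2 head_tridiag head_far).
rewrite !core !core1 !lucasU_SS.
set a := lucasU x p.+1; set b := lucasU x p.
transitivity (a ^+ 2 * \det (fmx 4 (pencil 0))
  - a * b * (\det (fmx 3 (pencil 0)) + \det (fmx 3 (fun i j => pencil 0 i.+1 j.+1)))
  + b ^+ 2 * \det (fmx 2 (fun i j => pencil 0 i.+1 j.+1))); first by ring.
by rewrite det_pencil_core4 det_pencil_core3 det_pencil_core2 ew1; ring.
Qed.

End Pencil.

Lemma chebU_lucasU (R : comNzRingType) k (u : R) : chebU k u = lucasU (2 * u) k.+1.
Proof.
suff : chebU k u = lucasU (2 * u) k.+1 /\ chebU k.+1 u = lucasU (2 * u) k.+2 by case.
elim: k => [|k [IHk IHk1]]; first by rewrite /= mulr1 subr0.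
by split; last by rewrite lucasU_SS -IHk -IHk1.
Qed.

Lemma eigenvalue_det (F : fieldType) n (A : 'M[F]_n) a :
  eigenvalue A a = (\det (a%:M - A) == 0).
Proof.
apply/eigenvalueP/det0P => [[v Av_av v_nz] | [v v_nz Av_av]]; exists v => //.
  by rewrite mulmxBr Av_av mul_mx_scalar subrr.
by apply/eqP; rewrite -mul_mx_scalar eq_sym -subr_eq0 -mulmxBr Av_av.
Qed.

Section HermitianPart.
Variable R : realType.

Lemma expi_mulN (t : R) : expi t * expi (- t) = 1.
Proof.
rewrite /expi cosN sinN; apply/eqP; rewrite eq_complex /=.
by rewrite mulrN opprK -!expr2 cos2Dsin2 eqxx mulrN mulrC addNr eqxx.
Qed.

Lemma Cmx_Centry p (i j : 'I_(2 * p.+2)) : Cmx R p.+2 i j = Centry _ p i j.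
Proof. by rewrite mxE. Qed.

Lemma conjc_Centry p i j : (Centry R[i] p i j)^*%C = Centry _ p i j.
Proof. by rewrite /Centry rmorphB rmorphD /= !conjc_nat. Qed.

Lemma Hmx_entry n (X : 'M[R[i]]_n) t i j :
  Hmx X t i j = 2^-1 * (expi (- t) * X i j + expi t * (X j i)^*%C).
Proof. by rewrite !mxE. Qed.

Lemma Hmx_Cmx_pencil p t (u : R[i]) :
  u%:M - Hmx (Cmx R p.+2) t =
    2^-1 *: fmx (2 * p.+2) (pencil (2 * u) (expi t) (expi (- t)) p).
Proof.
apply/matrixP => i j; rewrite mxE [X in _ + X]mxE Hmx_entry !Cmx_Centry conjc_Centry !mxE /pencil.
by rewrite -mulr_natr; field.
Qed.

Lemma det_char_Hmx_Cmx m (t : R) (u : R[i]) : (2 <= m)%N ->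
  \det (u%:M - Hmx (Cmx R m) t) =
    (2 ^+ (2 * m))^-1
    * (chebU m u - chebU m.-1 u - chebU m.-2 u)
    * (chebU m u + chebU m.-1 u - chebU m.-2 u).
Proof.
case: m => [|[|p]] // _.
rewrite Hmx_Cmx_pencil detZ det_pencil ?expi_mulN // !chebU_lucasU.
by rewrite exprVn mulrA.
Qed.

Lemma circular_of_det_char n (X : 'M[R[i]]_n) :
  (forall t1 t2 u, \det (u%:M - Hmx X t1) = \det (u%:M - Hmx X t2)) -> circular X.
Proof.
move=> eq_det t1 t2 l.
by apply: etrans (eigenvalue_det _ _) _; rewrite (eq_det t1 t2) -eigenvalue_det.
Qed.

End HermitianPart.

Theorem mainTheorem17 (R : realType) (m : nat) (hm : (2 <= m)%N) :
  (forall (t : R) (u : R[i]),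
     \det (u%:M - Hmx (Cmx R m) t) =
       (2 ^+ (2 * m))^-1
       * (chebU m u - chebU m.-1 u - chebU m.-2 u)
       * (chebU m u + chebU m.-1 u - chebU m.-2 u))
  /\ circular (Cmx R m).
Proof.
have char_Hmx t u := @det_char_Hmx_Cmx R m t u hm.
split; first exact: char_Hmx.
apply: circular_of_det_char => t1 t2 u.
(* Rewriting both sides at once would make Rocq try to unify H_C(t1) with H_C(t2). *)
by rewrite [LHS]char_Hmx [RHS]char_Hmx.
Qed.
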